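(* Let $\psi(t)$ be a rational function, $a\in\mathbb{C}$ and $d\in\mathbb{Z}$, such that the pole of $\psi$ at $t=a$ has order at most $d$. Then $\psi(t)$ is symplectic of order $d$ at $t=a$ if and only if $$\psi\!\left(\frac{a^2-2a+(1-a)t}{a-1-t}\right)=(a-1-t)^d\,\psi(t).$$
   Context: A formal power series $\varphi(x)=\sum_{i\ge0}\gamma_i x^i\in\mathbb{C}[[x]]$ is called symplectic if for every $m\ge1$ one has $\sum_{k=0}^{m-1}(-1)^k\binom{m-1}{k}\gamma_{m+k}=0$. A meromorphic function $\psi(t)$ whose pole at $t=a$ has order at most $d$ is called symplectic at $a$ of order $d$ if the formal power series $x^d\psi(a-x)\in\mathbb{C}[[x]]$ is symplectic. *)

(* C = R[i] for a realType R (a model of the complex numbers). *)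
From HB Require Import structures.
From mathcomp Require Import all_boot all_order all_algebra.
From mathcomp Require Import reals complex.
Set Implicit Arguments. Unset Strict Implicit. Unset Printing Implicit Defensive.
Import Order.TTheory GRing.Theory Num.Theory.
Local Open Scope ring_scope.

Notation "x %:F" := (@FracField.tofrac _ x).

Section Symplectic.
Variable F : fieldType.

(* A formal power series phi(x) = sum_i gamma_i x^i is given by its
   coefficient sequence gamma : nat -> F. *)
Definition symplectic_series (gamma : nat -> F) : Prop :=
  forall m : nat, (1 <= m)%N ->
    \sum_(k < m) (-1) ^+ k * ('C(m.-1, k))%:R * gamma (m + k)%N = 0.

(* gamma is the power series expansion (in C[[x]]) of the rational function
   P(x)/Q(x), Q <> 0: i.e. Q(x) * (sum_i gamma_i x^i) = P(x) in F[[x]]. *)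
Definition series_expansion (P Q : {poly F}) (gamma : nat -> F) : Prop :=
  forall n : nat, \sum_(k < n.+1) Q`_k * gamma (n - k)%N = P`_n.

(* For psi = p/q, the rational function x^d psi(a - x) written as
   num/den with polynomials in x. *)
Definition shifted_num (p : {poly F}) (a : F) (d : int) : {poly F} :=
  match d with
  | Posz n => 'X^n * (p \Po (a%:P - 'X))
  | Negz _ => p \Po (a%:P - 'X)
  end.

Definition shifted_den (q : {poly F}) (a : F) (d : int) : {poly F} :=
  match d with
  | Posz _ => q \Po (a%:P - 'X)
  | Negz n => 'X^(n.+1) * (q \Po (a%:P - 'X))
  end.

(* The pole of psi = p/q at t = a has order at most d, i.e. the formal
   Laurent series x^d psi(a - x) lies in F[[x]]. *)
Definition pole_order_le (p q : {poly F}) (a : F) (d : int) : Prop :=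
  exists gamma, series_expansion (shifted_num p a d) (shifted_den q a d) gamma.

Definition symplectic_at (p q : {poly F}) (a : F) (d : int) : Prop :=
  exists gamma, series_expansion (shifted_num p a d) (shifted_den q a d) gamma
                /\ symplectic_series gamma.

Definition poly_subst (p : {poly F}) (m : {fraction {poly F}}) : {fraction {poly F}} :=
  (map_poly (fun c : F => (c%:P)%:F) p).[m].

Definition moeb (a : F) : {fraction {poly F}} :=
  ((a ^+ 2 - 2 * a)%:P + (1 - a) *: 'X)%:F / ((a - 1)%:P - 'X)%:F.

End Symplectic.

(* Put phi(x) = x^d psi(a - x).  Conjugation by t |-> a - t turns the Moebius
   map into the involution sigma(x) = x / (x - 1), and the functional equation
   of psi into phi(sigma x) = phi(x), first for phi as a rational function and
   then, equivalently, for its power series expansion.  For a power series phi,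
   the coefficient of x^(2m+1) in (x - 1)^m (phi(sigma x) - phi(x)) is -2 times
   the m-th symplectic sum, while, sigma being an involution, the lowest nonzero
   coefficient of phi(sigma x) - phi(x) always sits in odd degree.  Hence, away
   from characteristic 2, phi is symplectic iff it is sigma-invariant. *)

From HB Require Import structures.
From mathcomp Require Import all_boot all_order all_algebra.
From mathcomp Require Import reals complex.
From mathcomp Require Import ring zify.
Import Order.TTheory GRing.Theory Num.Theory.
Local Open Scope ring_scope.
Set Implicit Arguments. Unset Strict Implicit. Unset Printing Implicit Defensive.

Lemma mulr_exp_div (L : fieldType) (x y : L) i k : y != 0 -> (i <= k)%N ->
  y ^+ k * (x / y) ^+ i = x ^+ i * y ^+ (k - i).
Proof.
move=> y0 ik; rewrite exprMn exprVn -{1}(subnK ik) exprD -mulrA.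
by rewrite [y ^+ i * _]mulrC divfK ?expf_neq0 // mulrC.
Qed.

Section PolySubst.
Variable F : fieldType.
Implicit Types (f g : {poly F}) (m : {fraction {poly F}}).

Lemma poly_substE f m :
  poly_subst f m = (map_poly (@FracField.tofrac _ \o polyC) f).[m].
Proof. by []. Qed.

Lemma poly_substB f g m : poly_subst (f - g) m = poly_subst f m - poly_subst g m.
Proof. by rewrite !poly_substE rmorphB hornerD hornerN. Qed.

Lemma poly_substM f g m : poly_subst (f * g) m = poly_subst f m * poly_subst g m.
Proof. by rewrite !poly_substE rmorphM hornerM. Qed.

Lemma poly_subst_exp f n m : poly_subst (f ^+ n) m = poly_subst f m ^+ n.
Proof. by rewrite !poly_substE rmorphXn horner_exp. Qed.

Lemma poly_substC c m : poly_subst c%:P m = (c%:P)%:F.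
Proof. by rewrite !poly_substE map_polyC hornerC. Qed.

Lemma poly_substX m : poly_subst 'X m = m.
Proof. by rewrite !poly_substE map_polyX hornerX. Qed.

Lemma poly_subst_sum (I : finType) (G : I -> {poly F}) m :
  poly_subst (\sum_i G i) m = \sum_i poly_subst (G i) m.
Proof. by rewrite !poly_substE rmorph_sum horner_sum. Qed.

Lemma poly_subst_comp f g m : poly_subst (f \Po g) m = poly_subst f (poly_subst g m).
Proof. by rewrite !poly_substE map_comp_poly horner_comp. Qed.

Lemma poly_subst_coef_wide k f m : (size f <= k)%N ->
  poly_subst f m = \sum_(i < k) ((f`_i)%:P)%:F * m ^+ i.
Proof.
move=> sf; rewrite !poly_substE (@horner_coef_wide _ k); last by rewrite size_map_poly.
by apply: eq_bigr => i _; rewrite coef_map.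
Qed.

Lemma poly_subst_tofracX f : poly_subst f ('X)%:F = f%:F.
Proof.
rewrite (@poly_subst_coef_wide (size f)) // -[in RHS](coefK f) poly_def rmorph_sum.
by apply: eq_bigr => i _; rewrite -mul_polyC rmorphM rmorphXn.
Qed.

End PolySubst.

Section Homogenization.
Variable F : fieldType.
Implicit Types (f u v : {poly F}) (m : {fraction {poly F}}).

(* [homog k f u v] is [v^k f(u/v)], with [f] regarded as of degree [k]. *)
Definition homog k f u v : {poly F} := \sum_(i < k.+1) f`_i *: (u ^+ i * v ^+ (k - i)).

Lemma poly_subst_homog k f u v m : (size f <= k.+1)%N -> poly_subst v m != 0 ->
  poly_subst (homog k f u v) m =
  poly_subst v m ^+ k * poly_subst f (poly_subst u m / poly_subst v m).
Proof.
move=> sf v0; rewrite (poly_subst_coef_wide _ sf) mulr_sumr poly_subst_sum.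
apply: eq_bigr => i _; rewrite -mul_polyC !poly_substM poly_substC !poly_subst_exp.
by rewrite [RHS]mulrCA mulr_exp_div // -ltnS.
Qed.

Lemma tofrac_homog k f u v : (size f <= k.+1)%N -> v != 0 ->
  (homog k f u v)%:F = v%:F ^+ k * poly_subst f (u%:F / v%:F).
Proof.
move=> sf v0; rewrite -poly_subst_tofracX poly_subst_homog //.
  by rewrite !poly_subst_tofracX.
by rewrite poly_subst_tofracX tofrac_eq0.
Qed.

Lemma size_homog k f u v : (size u <= 2)%N -> (size v <= 2)%N ->
  (size (homog k f u v) <= k.+1)%N.
Proof.
move=> su sv; apply: (big_ind (fun p : {poly F} => (size p <= k.+1)%N)).
- by rewrite size_poly0.
- by move=> p1 p2 s1 s2; rewrite (leq_trans (size_polyD _ _)) // geq_max s1 s2.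
move=> i _; rewrite (leq_trans (size_scale_leq _ _)) //.
rewrite (leq_trans (size_polyMleq _ _)) //.
have su' : (size (u ^+ i) <= i.+1)%N.
  apply: leq_trans (size_poly_exp_leq u i) _; have : ((size u).-1 <= 1)%N by lia. nia.
have sv' : (size (v ^+ (k - i)) <= (k - i).+1)%N.
  apply: leq_trans (size_poly_exp_leq v _) _; have : ((size v).-1 <= 1)%N by lia. nia.
have := ltn_ord i; lia.
Qed.

Lemma homog_comp k f u v r : homog k f u v \Po r = homog k f (u \Po r) (v \Po r).
Proof.
rewrite linear_sum; apply: eq_bigr => i _.
by rewrite linearZ /= rmorphM !rmorphXn.
Qed.

End Homogenization.

Section Sigma.
Variable F : fieldType.
Implicit Types (f g : {poly F}).

Local Notation xF := (('X : {poly F})%:F).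
Local Notation yF := (('X - 1 : {poly F})%:F).

(* [sigma k f] is [(t - 1)^k f(t / (t - 1))]; since [t |-> t / (t - 1)] is an
   involution, so is [sigma k] on polynomials of degree at most [k]. *)
Definition sigma k f : {poly F} := homog k f 'X ('X - 1).

Definition sigmaF : {fraction {poly F}} := xF / yF.

Lemma size_XsubC1_exp k : size (('X - 1 : {poly F}) ^+ k) = k.+1.
Proof. by rewrite -polyC1 size_exp_XsubC. Qed.

Lemma XsubC1_neq0 : ('X - 1 : {poly F}) != 0.
Proof. by rewrite -size_poly_eq0 -(expr1 ('X - 1)) size_XsubC1_exp. Qed.

Lemma tofrac_XsubC1_neq0 : yF != 0.
Proof. by rewrite tofrac_eq0 XsubC1_neq0. Qed.

Lemma size_sigma k f : (size (sigma k f) <= k.+1)%N.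
Proof. by apply: size_homog; rewrite ?size_polyX // -(expr1 ('X - 1)) size_XsubC1_exp. Qed.

Lemma tofrac_sigma k f : (size f <= k.+1)%N ->
  (sigma k f)%:F = yF ^+ k * poly_subst f sigmaF.
Proof. by move=> sf; rewrite tofrac_homog // XsubC1_neq0. Qed.

Lemma poly_subst_sigma k f : (size f <= k.+1)%N ->
  poly_subst (sigma k f) sigmaF = f%:F / yF ^+ k.
Proof.
have yF0 := tofrac_XsubC1_neq0.
have XsubC1_sigmaF : poly_subst ('X - 1) sigmaF = yF^-1.
  rewrite poly_substB poly_substX -polyC1 poly_substC tofrac1 /sigmaF.
  have -> : xF = yF + 1 by rewrite -tofrac1 -tofracD subrK.
  by rewrite mulrDl divff // mul1r addrAC subrr add0r.
move=> sf; rewrite poly_subst_homog; [|exact: sf|by rewrite XsubC1_sigmaF invr_eq0].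
rewrite XsubC1_sigmaF poly_substX /sigmaF invrK divfK // poly_subst_tofracX.
by rewrite exprVn mulrC.
Qed.

Lemma sigmaK k f : (size f <= k.+1)%N -> sigma k (sigma k f) = f.
Proof.
move=> sf; apply/eqP; rewrite -tofrac_eq tofrac_sigma ?size_sigma //.
by rewrite poly_subst_sigma // mulrC divfK // expf_neq0 // tofrac_XsubC1_neq0.
Qed.

Lemma sigma_eq0 k f : (size f <= k.+1)%N -> (sigma k f == 0) = (f == 0).
Proof.
have sigma0 : sigma k 0 = 0 by rewrite /sigma /homog big1 // => i _; rewrite coef0 scale0r.
move=> sf; apply/eqP/eqP => [f0|->]; last exact: sigma0.
by rewrite -(sigmaK sf) f0 sigma0.
Qed.

Lemma sigmaM a b f g : (size f <= a.+1)%N -> (size g <= b.+1)%N ->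
  sigma (a + b) (f * g) = sigma a f * sigma b g.
Proof.
move=> sf sg; have sfg : (size (f * g)%R <= (a + b).+1)%N.
  by rewrite (leq_trans (size_polyMleq _ _)) //; lia.
apply/eqP; rewrite -tofrac_eq tofracM !tofrac_sigma // poly_substM exprD.
by rewrite mulrACA.
Qed.

Lemma sigma_shift k n f : (size f <= k.+1)%N ->
  sigma (k + n) f = ('X - 1) ^+ n * sigma k f.
Proof.
move=> sf; apply/eqP; rewrite -tofrac_eq tofracM rmorphXn !tofrac_sigma //; last first.
  by rewrite (leq_trans sf) // ltnS leq_addr.
by rewrite exprD mulrA [yF ^+ k * _]mulrC.
Qed.

Lemma sigmaXn k i : (i <= k)%N -> sigma k 'X^i = 'X^i * ('X - 1) ^+ (k - i).
Proof.
move=> ik; apply/eqP; rewrite -tofrac_eq tofrac_sigma ?size_polyXn //.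
rewrite poly_subst_exp poly_substX tofracM !rmorphXn.
by rewrite mulr_exp_div // tofrac_XsubC1_neq0.
Qed.

Lemma sigma_XsubC1_exp k : sigma k (('X - 1) ^+ k) = 1.
Proof.
have sigma1 : sigma k 1 = ('X - 1) ^+ k.
  rewrite -[k in sigma k _]add0n sigma_shift ?size_poly1 // -(expr0 'X).
  by rewrite sigmaXn // subnn !expr0 !mulr1.
by rewrite -sigma1 sigmaK // size_poly1.
Qed.

Lemma sigmaB k f g : sigma k (f - g) = sigma k f - sigma k g.
Proof.
rewrite /sigma /homog -sumrB; apply: eq_bigr => i _.
by rewrite coefB scalerBl.
Qed.

Lemma sigmaZ k c f : sigma k (c *: f) = c *: sigma k f.
Proof.
rewrite /sigma /homog scaler_sumr; apply: eq_bigr => i _.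
by rewrite coefZ scalerA.
Qed.

End Sigma.

Section EqUpto.
Variable F : fieldType.
Implicit Types (e f g h : {poly F}).

Definition eq_upto n f g := forall j, (j <= n)%N -> f`_j = g`_j.

Lemma eq_upto_sym n f g : eq_upto n f g -> eq_upto n g f.
Proof. by move=> fg j jn; rewrite fg. Qed.

Lemma eq_upto_trans n f g h : eq_upto n f g -> eq_upto n g h -> eq_upto n f h.
Proof. by move=> fg gh j jn; rewrite fg // gh. Qed.

Lemma subr_eq_upto0 n f g : eq_upto n (f - g) 0 <-> eq_upto n f g.
Proof.
split=> fg j jn; last by rewrite coefB fg // subrr coef0.
by apply/eqP; rewrite -subr_eq0 -coefB fg // coef0.
Qed.

Lemma eq_uptoB n f1 g1 f2 g2 :
  eq_upto n f1 g1 -> eq_upto n f2 g2 -> eq_upto n (f1 - f2) (g1 - g2).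
Proof. by move=> fg1 fg2 j jn; rewrite !coefB fg1 // fg2. Qed.

Lemma eq_uptoMl n h f g : eq_upto n f g -> eq_upto n (h * f) (h * g).
Proof.
move=> fg j jn; rewrite !coefM; apply: eq_bigr => i _.
by rewrite fg // (leq_trans (leq_subr _ _)).
Qed.

Lemma eq_uptoMr n h f g : eq_upto n f g -> eq_upto n (f * h) (g * h).
Proof. by rewrite ![_ * h]mulrC; apply: eq_uptoMl. Qed.

Lemma eq_upto_dvdp n f g : eq_upto n f g <-> 'X^(n.+1) %| f - g.
Proof.
rewrite -subr_eq_upto0 /dvdp -Pdiv.IdomainMonic.take_poly_modp; split=> [e0|/eqP e0 j jn].
  apply/eqP/polyP => j; rewrite coef_take_poly coef0.
  by case: ltnP => // jn; rewrite e0 ?coef0.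
by have := congr1 (fun p : {poly F} => p`_j) e0; rewrite coef_take_poly ltnS jn coef0.
Qed.

Lemma eq_upto_cancel n h f g :
  h`_0 != 0 -> eq_upto n (h * f) (h * g) -> eq_upto n f g.
Proof.
move=> h0; rewrite !eq_upto_dvdp -mulrBr Gauss_dvdpr //.
by rewrite coprimep_expl // coprimep_sym coprimepX /root horner_coef0.
Qed.

Lemma eq_upto_Xn n v f g : eq_upto (n + v) ('X^v * f) ('X^v * g) -> eq_upto n f g.
Proof.
rewrite !eq_upto_dvdp -mulrBr -addSn exprD mulrC dvdp_mul2l //.
by rewrite expf_neq0 // polyX_eq0.
Qed.

Lemma eq_upto_sigma n k f g : eq_upto n f g -> eq_upto n (sigma k f) (sigma k g).
Proof.
move/subr_eq_upto0 => fg; apply/subr_eq_upto0; rewrite -sigmaB.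
move=> j jn; rewrite coef0 /sigma /homog coef_sum big1 // => i _.
rewrite coefZ; case: (leqP i n) => [iN|nI]; first by rewrite fg // coef0 mul0r.
by rewrite coefXnM (leq_ltn_trans jn nI) mulr0.
Qed.

End EqUpto.

Section SymplecticSeries.
Variable F : fieldType.
Implicit Types (gam : nat -> F) (f : {poly F}).

Lemma coef0_exp f k : (f ^+ k)`_0 = f`_0 ^+ k.
Proof. by rewrite -!horner_coef0 horner_exp. Qed.

Definition series_trunc gam n : {poly F} := \poly_(i < n.+1) gam i.

(* The series [\sum_i gam i x^i] is fixed by [x |-> x / (x - 1)], truncation by truncation. *)
Definition sigma_invariant gam := forall n,
  eq_upto n (sigma n (series_trunc gam n)) (('X - 1) ^+ n * series_trunc gam n).

(* The [m.+1]-th symplectic condition of [symplectic_series]. *)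
Definition symplectic_sum gam m :=
  \sum_(k < m.+1) (-1) ^+ k * ('C(m, k))%:R * gam (m.+1 + k)%N.

(* Truncation of the power series of [(X - 1)^-1 = - (1 + X + X^2 + ...)]. *)
Definition XsubC1_inv n : {poly F} := - \poly_(i < n.+1) 1.

Lemma size_series_trunc gam n : (size (series_trunc gam n) <= n.+1)%N.
Proof. exact: size_poly. Qed.

Lemma series_trunc_leq gam m n : (m <= n)%N ->
  eq_upto m (series_trunc gam n) (series_trunc gam m).
Proof. by move=> mn j jm; rewrite !coef_poly !ltnS jm (leq_trans jm mn). Qed.

Lemma coef0_XsubC1_inv n : (XsubC1_inv n)`_0 = -1.
Proof. by rewrite coefN coef_poly. Qed.

Lemma XsubC1_inv_expK n e : eq_upto n (('X - 1) ^+ e * XsubC1_inv n ^+ e) 1.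
Proof.
have XsubC1_invK : eq_upto n (('X - 1) * XsubC1_inv n) 1.
  move=> j jn; rewrite mulrBl mul1r coefB coefXM coefN coef1 !coefN !coef_poly.
  by case: j jn => [|j] jn /=; rewrite ?sub0r ?opprK // !ltnS (ltnW jn) jn addNr.
rewrite -exprMn; elim: e => [|e IH] //; rewrite exprS.
by apply: eq_upto_trans (eq_uptoMl _ IH) _; rewrite mulr1.
Qed.

Lemma coef_sigmaXn_XsubC1_inv n k i : (n <= k.+1)%N -> (i < k.+1)%N ->
  ('X^i * ('X - 1) ^+ (k - i) * XsubC1_inv n ^+ (k.+1 - n))`_n = - (i == n)%:R.
Proof.
move=> nk ik; case: (ltngtP n i) => [ni|il|ni].
- by rewrite -mulrA coefXnM ni oppr0.
- have -> : (k - i = (n.-1 - i) + (k.+1 - n))%N by lia.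
  rewrite exprD mulrA -mulrA (eq_uptoMl _ (XsubC1_inv_expK (n:=n) _) (leqnn n)) mulr1.
  rewrite oppr0 nth_default //.
  by rewrite (leq_trans (size_polyMleq _ _)) // size_polyXn size_XsubC1_exp; lia.
- subst i; have -> : (k.+1 - n = (k - n).+1)%N by lia.
  rewrite -mulrA coefXnM ltnn subnn exprS mulrCA coef0M coef0_XsubC1_inv.
  by rewrite (XsubC1_inv_expK (n:=n) _ (leq0n _)) coef1 eqxx mulr1.
Qed.

Lemma coef_sigma_XsubC1_inv n k f : (n <= k.+1)%N -> (size f <= k.+1)%N ->
  (sigma k f * XsubC1_inv n ^+ (k.+1 - n))`_n = - f`_n.
Proof.
move=> nk sf; rewrite /sigma /homog mulr_suml coef_sum.
under eq_bigr => i _ do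
  rewrite -scalerAl coefZ (coef_sigmaXn_XsubC1_inv nk (ltn_ord i)) mulrN mulr_natr mulrb.
rewrite sumrN -big_mkcond /= big_ord1_eq; case: ifP => // kn.
by rewrite nth_default ?oppr0 // (leq_trans sf) // leqNgt kn.
Qed.

Lemma symplectic_sum_coef gam m : let n := m.*2.+1 in
  symplectic_sum gam m = (series_trunc gam n * ('X - 1) ^+ m)`_n.
Proof.
rewrite /= [('X - 1) ^+ _]exprDn mulr_sumr coef_sum /symplectic_sum.
apply: eq_bigr => i _; have := ltn_ord i => im; rewrite -mulrnAr.
have -> : (-1 : {poly F}) ^+ i *+ 'C(m, i) = ((-1) ^+ i *+ 'C(m, i))%:P.
  by rewrite rmorphMn rmorph_sign.
rewrite mulrA coefMC coefMXn.
rewrite ifF; last by lia.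
rewrite coef_poly ifT; last by lia.
have -> : (m.*2.+1 - (m - i) = m.+1 + i)%N by lia.
by rewrite mulrC mulr_natr.
Qed.

Lemma coef_sigma_trunc_XsubC1_inv gam m : let n := m.*2.+1 in
  (sigma n (series_trunc gam n) * XsubC1_inv n ^+ m.+1)`_n = - symplectic_sum gam m.
Proof.
move=> n; set f := series_trunc gam n.
have sfm : (size (f * ('X - 1) ^+ m)%R <= (n + m).+1)%N.
  rewrite (leq_trans (size_polyMleq _ _)) // size_XsubC1_exp.
  by have := size_series_trunc gam n; rewrite -/f; lia.
have <- : sigma (n + m) (f * ('X - 1) ^+ m) = sigma n f.
  by rewrite sigmaM ?size_series_trunc ?size_XsubC1_exp // sigma_XsubC1_exp mulr1.
have -> : m.+1 = ((n + m).+1 - n)%N by lia.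
by rewrite coef_sigma_XsubC1_inv ?symplectic_sum_coef //; lia.
Qed.

Lemma coef_trunc_XsubC1_inv gam m : let n := m.*2.+1 in
  (('X - 1) ^+ n * series_trunc gam n * XsubC1_inv n ^+ m.+1)`_n = symplectic_sum gam m.
Proof.
move=> n; have -> : ('X - 1 : {poly F}) ^+ n = ('X - 1) ^+ m * ('X - 1) ^+ m.+1.
  by rewrite -exprD /n; congr (_ ^+ _); lia.
rewrite [_ * series_trunc _ _]mulrC -!mulrA mulrA.
by rewrite (eq_uptoMl _ (XsubC1_inv_expK (n:=n) _) (leqnn n)) mulr1 -symplectic_sum_coef.
Qed.

End SymplecticSeries.

Section SigmaInvariance.
Variable F : fieldType.
Hypothesis two_neq0 : (2%:R : F) != 0.
Implicit Types (gam : nat -> F) (e : {poly F}).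

Lemma eq_oppr_eq0 (x : F) : x = - x -> x = 0.
Proof.
move=> xN; have /eqP : x *+ 2 = 0 by rewrite mulr2n {1}xN addNr.
by rewrite -mulr_natr mulf_eq0 (negbTE two_neq0) orbF => /eqP.
Qed.

Definition sigma_defect gam n :=
  sigma n (series_trunc gam n) - ('X - 1) ^+ n * series_trunc gam n.

Lemma symplectic_sum_eq0 gam m : sigma_invariant gam -> symplectic_sum gam m = 0.
Proof.
move=> inv; apply: eq_oppr_eq0.
have := eq_uptoMr (XsubC1_inv F m.*2.+1 ^+ m.+1) (inv m.*2.+1) (leqnn _).
by rewrite coef_sigma_trunc_XsubC1_inv coef_trunc_XsubC1_inv => /esym.
Qed.

Lemma sigma_defect_shift gam n v :
  eq_upto n (('X - 1) ^+ v * sigma_defect gam n) (sigma_defect gam (n + v)).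
Proof.
have trunc_n := series_trunc_leq gam (leq_addr v n).
rewrite /sigma_defect mulrBr; apply: eq_uptoB.
  rewrite -sigma_shift ?size_series_trunc //.
  by apply: eq_upto_sigma; apply: eq_upto_sym.
by rewrite mulrA -exprD addnC; apply: eq_uptoMl; apply: eq_upto_sym.
Qed.

Lemma sigma_defect_anti gam n : sigma (n + n) (sigma_defect gam n) = - sigma_defect gam n.
Proof.
set f := series_trunc gam n; have sf : (size f <= n.+1)%N := size_series_trunc gam n.
rewrite /sigma_defect sigmaB opprB.
rewrite sigmaM ?size_XsubC1_exp // sigma_XsubC1_exp mul1r.
rewrite -[sigma n f]mulr1 sigmaM ?size_sigma ?size_poly1 // sigmaK //.
by rewrite -(expr0 'X) sigmaXn // expr0 mul1r subn0 mulrC.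
Qed.

Lemma eq_upto_lead e n : (forall j, (j < n)%N -> e`_j = 0) ->
  eq_upto n e (e`_n *: 'X^n).
Proof.
move=> low j jn; rewrite coefZ coefXn.
case: (ltngtP j n) => [jn'|nj|->]; first by rewrite low ?mulr0.
  by move: jn; rewrite leqNgt nj.
by rewrite mulr1.
Qed.

Lemma coef_sigma_scaleXn (c : F) n : (sigma (n + n) (c *: 'X^n))`_n = (-1) ^+ n * c.
Proof.
rewrite sigmaZ sigmaXn ?leq_addr // coefZ coefXnM ltnn subnn addnK coef0_exp.
by rewrite coefB coefX coef1 sub0r mulrC.
Qed.

Lemma sigma_defect_coef_eq0 gam n : (forall m, symplectic_sum gam m = 0) ->
  (forall j, (j < n)%N -> (sigma_defect gam n)`_j = 0) -> (sigma_defect gam n)`_n = 0.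
Proof.
move=> sum0 /eq_upto_lead Ec; set c := _`_n in Ec *.
have anti : - c = (-1) ^+ n * c.
  by rewrite -coef_sigma_scaleXn -(eq_upto_sigma _ Ec (leqnn n)) sigma_defect_anti coefN.
have [n_odd|n_even] := boolP (odd n); last first.
  by apply: eq_oppr_eq0; rewrite anti -signr_odd (negbTE n_even) mul1r.
have [m nE] : exists m, n = m.*2.+1.
  by exists n./2; rewrite -[n in LHS]odd_double_half n_odd add1n.
subst n; have := eq_uptoMr (XsubC1_inv F m.*2.+1 ^+ m.+1) Ec (leqnn _).
rewrite /sigma_defect mulrBl coefB coef_sigma_trunc_XsubC1_inv.
rewrite coef_trunc_XsubC1_inv sum0 oppr0 addr0 -scalerAl coefZ coefXnM ltnn subnn.
rewrite coef0_exp coef0_XsubC1_inv => /esym/eqP.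
by rewrite mulf_eq0 signr_eq0 orbF => /eqP.
Qed.

Lemma sigma_invariant_of_symplectic_sum gam :
  (forall m, symplectic_sum gam m = 0) -> sigma_invariant gam.
Proof.
move=> sum0 n; apply/subr_eq_upto0; rewrite -/(sigma_defect gam n).
have top k : (forall j, (j < k)%N -> (sigma_defect gam k)`_j = 0) ->
    eq_upto k (sigma_defect gam k) 0.
  move=> low j; rewrite coef0 leq_eqVlt => /orP [/eqP ->|/low //].
  exact: sigma_defect_coef_eq0.
elim: n => [|n IH]; apply: top => // j; rewrite ltnS => jn.
have := eq_upto_trans (eq_upto_sym (@sigma_defect_shift gam n 1)) (eq_uptoMl _ IH).
by rewrite addn1 mulr0 => /(_ j jn); rewrite coef0.
Qed.

Lemma sigma_invariantP gam : sigma_invariant gam <-> symplectic_series gam.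
Proof.
split=> [inv [|m] _ //|symp]; first exact: symplectic_sum_eq0.
by apply: sigma_invariant_of_symplectic_sum => m; apply: (symp m.+1).
Qed.

End SigmaInvariance.

Section SigmaFixed.
Variable F : fieldType.
Variables (N D : {poly F}) (gam : nat -> F) (k : nat).
Hypothesis ND_gam : series_expansion N D gam.
Hypotheses (sN : (size N <= k.+1)%N) (sD : (size D <= k.+1)%N).

(* The rational function [N / D] is fixed by [t |-> t / (t - 1)]. *)
Definition sigma_fixed := sigma k N * D = sigma k D * N.

Lemma eq_upto_series_expansion n : eq_upto n (D * series_trunc gam n) N.
Proof.
move=> j jn; rewrite -ND_gam coefM; apply: eq_bigr => i _.
by rewrite coef_poly ltnS (leq_trans (leq_subr _ _) jn).
Qed.

Lemma eq_upto_sigma_series_expansion n :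
  eq_upto n (sigma k D * sigma n (series_trunc gam n)) (('X - 1) ^+ n * sigma k N).
Proof.
rewrite -sigmaM ?size_series_trunc // -sigma_shift //.
exact/eq_upto_sigma/eq_upto_series_expansion.
Qed.

Lemma sigma_fixed_defect n : sigma_fixed ->
  eq_upto n (sigma k D * D * sigma_defect gam n) 0.
Proof.
move=> fixed; rewrite /sigma_defect mulrBr; apply/subr_eq_upto0.
rewrite mulrAC mulrC; apply: eq_upto_trans (eq_uptoMl D (eq_upto_sigma_series_expansion (n:=n))) _.
rewrite mulrCA [D * _]mulrC fixed mulrCA -mulrA.
apply: eq_uptoMl; rewrite [D * _]mulrCA; apply: eq_uptoMl.
by apply: eq_upto_sym; apply: eq_upto_series_expansion.
Qed.

Lemma coef0_XsubC1_exp_neq0 v : (('X - 1 : {poly F}) ^+ v)`_0 != 0.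
Proof. by rewrite coef0_exp coefB coefX coef1 sub0r signr_eq0. Qed.

Lemma sigma_fixed_invariant : D != 0 -> sigma_fixed -> sigma_invariant gam.
Proof.
move=> D0 fixed; have Z0 : sigma k D * D != 0 by rewrite mulf_neq0 ?sigma_eq0.
have [v [Z' Z'0 ZE]] : exists v, exists2 Z' : {poly F}, Z'`_0 != 0 & sigma k D * D = 'X^v * Z'.
  have [v [Z' rootZ' ZE]] := multiplicity_XsubC (sigma k D * D) 0.
  exists v, Z'; last by rewrite ZE polyC0 subr0 mulrC.
  by move: rootZ'; rewrite Z0 /root horner_coef0.
move=> n; apply/subr_eq_upto0; rewrite -/(sigma_defect gam n).
have shifted0 : eq_upto n (sigma_defect gam (n + v)) 0.
  apply: (eq_upto_cancel Z'0); rewrite mulr0; apply: (eq_upto_Xn (v := v)).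
  by rewrite mulr0 mulrA -ZE; apply: sigma_fixed_defect.
apply: (eq_upto_cancel (coef0_XsubC1_exp_neq0 v)); rewrite mulr0.
exact: eq_upto_trans (@sigma_defect_shift _ gam n v) shifted0.
Qed.

Lemma sigma_invariant_fixed : sigma_invariant gam -> sigma_fixed.
Proof.
move=> inv; apply/polyP => n.
have sigma_trunc : eq_upto n (sigma k D * series_trunc gam n) (sigma k N).
  apply: (eq_upto_cancel (coef0_XsubC1_exp_neq0 n)); rewrite mulrCA.
  apply: eq_upto_trans (eq_upto_sigma_series_expansion (n:=n)).
  by apply: eq_uptoMl; apply: eq_upto_sym; apply: inv.
rewrite mulrC; apply: (eq_upto_trans (eq_upto_sym (eq_uptoMl D sigma_trunc))) (leqnn n).
by rewrite mulrCA; apply: eq_uptoMl; apply: eq_upto_series_expansion.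
Qed.

End SigmaFixed.

Section Moebius.
Variable F : fieldType.
Implicit Types (f p q : {poly F}) (a : F).

Definition refl_at a : {poly F} := a%:P - 'X.
Definition moeb_num a : {poly F} := (a ^+ 2 - 2 * a)%:P + (1 - a) *: 'X.
Definition moeb_den a : {poly F} := (a - 1)%:P - 'X.

Definition moeb_equation p q a d :=
  poly_subst p (moeb a) / poly_subst q (moeb a) = (moeb_den a)%:F ^ d * (p%:F / q%:F).

Lemma size_refl_at a : size (refl_at a) = 2%N.
Proof. by rewrite /refl_at -opprB size_polyN size_XsubC. Qed.

Lemma size_moeb_den a : size (moeb_den a) = 2%N.
Proof. by rewrite /moeb_den -opprB size_polyN size_XsubC. Qed.

Lemma moeb_den_neq0 a : moeb_den a != 0.
Proof. by rewrite -size_poly_eq0 size_moeb_den. Qed.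

Lemma size_comp_refl_at a f : size (f \Po refl_at a) = size f.
Proof. by rewrite size_comp_poly2 // size_refl_at. Qed.

Lemma moeb_den_refl a : moeb_den a \Po refl_at a = 'X - 1.
Proof.
rewrite /moeb_den /refl_at comp_polyB comp_polyC comp_polyX rmorphB /= rmorph1.
by ring.
Qed.

Lemma comp_refl_at_inj a : injective (comp_poly (refl_at a)).
Proof.
move=> f g fg; have := congr1 (comp_poly (refl_at a)) fg.
have reflK : refl_at a \Po refl_at a = 'X.
  by rewrite /refl_at comp_polyB comp_polyC comp_polyX opprB addrC subrK.
by rewrite -!comp_polyA reflK !comp_polyXr.
Qed.

(* [moeb a (a - t) = a - t / (t - 1)]: conjugated by [t |-> a - t], the
   Moebius transformation becomes [t |-> t / (t - 1)]. *)
Lemma homog_moeb_refl a k f : (size f <= k.+1)%N ->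
  homog k f (moeb_num a) (moeb_den a) \Po refl_at a = sigma k (f \Po refl_at a).
Proof.
move=> sf; have num_refl : moeb_num a \Po refl_at a = a%:P * ('X - 1) - 'X.
  rewrite /moeb_num /refl_at comp_polyD comp_polyC comp_polyZ comp_polyX.
  rewrite -!mul_polyC !rmorphB !rmorphM /= ?rmorph1 ?rmorphXn /= rmorph_nat.
  by ring.
apply/eqP; rewrite homog_comp num_refl moeb_den_refl -tofrac_eq.
rewrite tofrac_homog ?XsubC1_neq0 // tofrac_sigma ?size_comp_refl_at //.
rewrite poly_subst_comp poly_substB poly_substC poly_substX /sigmaF.
rewrite [(_ - 'X)%:F]tofracB tofracM mulrBl mulfK //.
exact: tofrac_XsubC1_neq0.
Qed.

Lemma homog_moeb_neq0 a k f : (size f <= k.+1)%N -> f != 0 ->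
  homog k f (moeb_num a) (moeb_den a) != 0.
Proof.
move=> sf f0; apply: contraNneq f0 => H0; have := homog_moeb_refl a sf.
rewrite H0 comp_poly0 => /esym/eqP; rewrite sigma_eq0 ?size_comp_refl_at //.
by rewrite comp_poly2_eq0 ?size_refl_at // => /eqP.
Qed.

Lemma poly_subst_moeb a k f : (size f <= k.+1)%N ->
  poly_subst f (moeb a) = (homog k f (moeb_num a) (moeb_den a))%:F / (moeb_den a)%:F ^+ k.
Proof.
move=> sf; rewrite tofrac_homog ?moeb_den_neq0 // [_ * poly_subst _ _]mulrC mulfK //.
by rewrite expf_neq0 // tofrac_eq0 moeb_den_neq0.
Qed.

Lemma eq_tofrac_div (x y z t : {poly F}) : y != 0 -> t != 0 ->
  (x%:F / y%:F == z%:F / t%:F) = (x * t == z * y).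
Proof. by move=> y0 t0; rewrite eqr_div ?tofrac_eq0 // -!tofracM tofrac_eq. Qed.

Lemma moeb_equation_homog p q a d k :
  (size p <= k.+1)%N -> (size q <= k.+1)%N -> q != 0 ->
  moeb_equation p q a d <->
  (homog k p (moeb_num a) (moeb_den a))%:F / (homog k q (moeb_num a) (moeb_den a))%:F
  = (moeb_den a)%:F ^ d * (p%:F / q%:F).
Proof.
move=> sp sq q0; rewrite /moeb_equation (poly_subst_moeb a sp) (poly_subst_moeb a sq).
by rewrite invf_div mulrA divfK // expf_neq0 // tofrac_eq0 moeb_den_neq0.
Qed.

Lemma moeb_equation_pos p q a n k :
  (size p <= k.+1)%N -> (size q <= k.+1)%N -> q != 0 ->
  moeb_equation p q a (Posz n) <->
  sigma_fixed (shifted_num p a (Posz n)) (shifted_den q a (Posz n)) (k + n).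
Proof.
move=> sp sq q0; have Hq0 := homog_moeb_neq0 a sq q0.
rewrite (moeb_equation_homog _ _ sp sq q0) /sigma_fixed /= -/(refl_at a).
have -> : (moeb_den a)%:F ^ Posz n = (moeb_den a)%:F ^+ n by [].
rewrite [(moeb_den a)%:F ^+ n * _]mulrA -tofracXn -tofracM.
transitivity (homog k p (moeb_num a) (moeb_den a) * q
              = moeb_den a ^+ n * p * homog k q (moeb_num a) (moeb_den a)).
  split=> [/eqP|E]; first by rewrite eq_tofrac_div // => /eqP.
  by apply/eqP; rewrite eq_tofrac_div // E.
rewrite (rwP eqP) -(inj_eq (@comp_refl_at_inj a)) -(rwP eqP).
rewrite !comp_polyM [moeb_den a ^+ n \Po _]rmorphXn /= moeb_den_refl !homog_moeb_refl //.
have spr : (size (p \Po refl_at a) <= k.+1)%N by rewrite size_comp_refl_at.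
have sqr : (size (q \Po refl_at a) <= k.+1)%N by rewrite size_comp_refl_at.
rewrite addnC sigmaM ?size_polyXn // sigmaXn // subnn expr0 mulr1 addnC sigma_shift //.
have Xn0 : ('X^n : {poly F}) != 0 by rewrite monic_neq0 ?monicXn.
split=> E; first by rewrite -mulrA E; ring.
by apply: (mulfI Xn0); rewrite mulrA E; ring.
Qed.

Lemma moeb_equation_neg p q a n k :
  (size p <= k.+1)%N -> (size q <= k.+1)%N -> q != 0 ->
  moeb_equation p q a (Negz n) <->
  sigma_fixed (shifted_num p a (Negz n)) (shifted_den q a (Negz n)) (k + n.+1).
Proof.
move=> sp sq q0; have Hq0 := homog_moeb_neq0 a sq q0.
have Vq0 : moeb_den a ^+ n.+1 * q != 0 by rewrite mulf_neq0 ?expf_neq0 ?moeb_den_neq0.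
rewrite (moeb_equation_homog _ _ sp sq q0) /sigma_fixed /= -/(refl_at a).
have -> : (moeb_den a)%:F ^ Negz n = ((moeb_den a)%:F ^+ n.+1)^-1 by [].
rewrite mulrCA -invfM -tofracXn -tofracM.
transitivity (homog k p (moeb_num a) (moeb_den a) * (moeb_den a ^+ n.+1 * q)
              = p * homog k q (moeb_num a) (moeb_den a)).
  split=> [/eqP|E]; first by rewrite eq_tofrac_div // => /eqP.
  by apply/eqP; rewrite eq_tofrac_div // E.
rewrite (rwP eqP) -(inj_eq (@comp_refl_at_inj a)) -(rwP eqP).
rewrite !comp_polyM [moeb_den a ^+ n.+1 \Po _]rmorphXn /= moeb_den_refl !homog_moeb_refl //.
have spr : (size (p \Po refl_at a) <= k.+1)%N by rewrite size_comp_refl_at.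
have sqr : (size (q \Po refl_at a) <= k.+1)%N by rewrite size_comp_refl_at.
rewrite sigma_shift // addnC sigmaM ?size_polyXn // sigmaXn // subnn expr0 mulr1.
have Xn0 : ('X^(n.+1) : {poly F}) != 0 by rewrite monic_neq0 ?monicXn.
split=> E.
  transitivity ('X^(n.+1) * (sigma k (p \Po refl_at a) *
                (('X - 1) ^+ n.+1 * (q \Po refl_at a)))); first by ring.
  by rewrite E; ring.
apply: (mulfI Xn0); transitivity (('X - 1) ^+ n.+1 * sigma k (p \Po refl_at a) *
                                  ('X^(n.+1) * (q \Po refl_at a))); first by ring.
by rewrite E; ring.
Qed.
End Moebius.

Section Main.
Variable F : fieldType.
Implicit Types (p q : {poly F}) (a : F) (d : int).

Lemma moeb_equation_sigma_fixed p q a d : q != 0 ->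
  let k := (size p + size q + `|d|)%N in
  [/\ (size (shifted_num p a d) <= k.+1)%N, (size (shifted_den q a d) <= k.+1)%N,
      shifted_den q a d != 0 &
      (moeb_equation p q a d <-> sigma_fixed (shifted_num p a d) (shifted_den q a d) k)].
Proof.
move=> q0; rewrite /shifted_num /shifted_den -/(refl_at a).
have sp : (size p <= (size p + size q).+1)%N by rewrite leqW ?leq_addr.
have sq : (size q <= (size p + size q).+1)%N by rewrite leqW ?leq_addl.
have qr0 : q \Po refl_at a != 0 by rewrite comp_poly2_eq0 ?size_refl_at.
have sXn m (r : {poly F}) : (size ('X^m * r)%R <= m + size r)%N.
  by rewrite (leq_trans (size_polyMleq _ _)) // size_polyXn.
case: d => n /=; split; rewrite ?size_comp_refl_at.
- apply: leq_trans (sXn _ _) (leqW _).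
  by rewrite size_comp_refl_at addnC leq_add2r leq_addr.
- exact: leq_trans sq (leq_addr n _).
- exact: qr0.
- exact: moeb_equation_pos.
- exact: leq_trans sp (leq_addr n.+1 _).
- apply: leq_trans (sXn _ _) (leqW _).
  by rewrite size_comp_refl_at addnC leq_add2r leq_addl.
- by rewrite mulf_neq0 // monic_neq0 ?monicXn.
- exact: moeb_equation_neg.
Qed.

Theorem symplectic_atP p q a d : (2%:R : F) != 0 -> q != 0 ->
  pole_order_le p q a d -> (symplectic_at p q a d <-> moeb_equation p q a d).
Proof.
move=> two_neq0 q0 [gam expansion].
have [sN sD D0 ->] := moeb_equation_sigma_fixed p a d q0.
split=> [[gam' [expansion' symp]]|fixed].
  by apply: sigma_invariant_fixed expansion' sN sD _; apply/sigma_invariantP.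
exists gam; split=> //; apply/(sigma_invariantP two_neq0).
exact: sigma_fixed_invariant expansion sN sD D0 fixed.
Qed.

End Main.

Theorem corollary1p7 (R : realType) (p q : {poly R[i]}) (a : R[i]) (d : int) :
  q != 0 ->
  pole_order_le p q a d ->
  (symplectic_at p q a d <->
   poly_subst p (moeb a) / poly_subst q (moeb a)
   = ((a - 1)%:P - 'X)%:F ^ d * ((p%:F) / (q%:F))).
Proof. by move=> q0; apply: symplectic_atP; rewrite // pnatr_eq0. Qed.
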